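(* Let $p$ be a polynomial in one real variable (with real coefficients) all of whose roots are negative real numbers and whose leading coefficient is positive. Then $p(n)>0$ for all $n\in\mathbb Z_+$ and $\{1/p(n)\}_{n=0}^\infty$ is a Hausdorff moment sequence.
   Context: A sequence $\{a_n\}_{n\ge0}$ of reals is a Hausdorff moment sequence if there is a positive Borel measure $\mu$ on $[0,1]$ with $a_n=\int_{[0,1]}x^n\,d\mu(x)$ for all $n\in\mathbb Z_+$. *)

From mathcomp Require Import all_boot all_order all_algebra.
From mathcomp Require Import all_classical all_reals all_analysis.
From mathcomp Require Import complex.
Set Implicit Arguments. Unset Strict Implicit. Unset Printing Implicit Defensive.
Import Order.TTheory GRing.Theory Num.Theory.
Local Open Scope ring_scope.
Local Open Scope classical_set_scope.

(* A (positive) Borel measure on [0,1] is represented as a measure on the Borel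
   sets of R integrated over [0,1] (equivalently, its restriction to [0,1]). *)
Definition hausdorff_moment_seq (R : realType) (a : nat -> R) : Prop :=
  exists mu : {measure set R -> \bar R},
    forall n : nat, ((a n)%:E = \int[mu]_(x in `[0%R, 1%R]) (x ^+ n)%:E)%E.

Definition all_roots_negative_real (R : realType) (p : {poly R}) : Prop :=
  forall z : R[i], root (map_poly (real_complex R) p) z ->
    exists a : R, a < 0 /\ z = real_complex R a.

(* If Y has law P and V, independent of Y, has density b v^(b-1) on [0,1]
   (V = U^(1/b) with U uniform), then E[(Y V)^n] = E[Y^n] b/(n+b).  Writing
   p = c (X + b_1) ... (X + b_k) with c > 0 and all b_i > 0, the sequence
   1/p(n) = c^-1 prod_i 1/(n + b_i) is therefore c^-1 times the moment
   sequence of U_1^(1/b_1) ... U_k^(1/b_k) for independent uniform U_i. *)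
From HB Require Import structures.
From mathcomp Require Import all_boot all_order all_algebra.
From mathcomp Require Import all_classical all_reals all_analysis.
From mathcomp Require Import complex.
From mathcomp Require Import measurable_realfun.
Set Implicit Arguments. Unset Strict Implicit. Unset Printing Implicit Defensive.
Import Order.TTheory GRing.Theory Num.Theory.
Import numFieldNormedType.Exports.
Local Open Scope classical_set_scope.
Local Open Scope ring_scope.

Lemma all_roots_negative_real_factor (R : realType) (p : {poly R}) :
  all_roots_negative_real p -> (1 < size p)%N ->
  exists2 b : R, 0 < b &
    exists2 q : {poly R}, p = q * ('X + b%:P) & all_roots_negative_real q.
Proof.
move=> neg_p size_p.
have [z root_z] : exists z, root (map_poly (real_complex R) p) z.
  by apply/closed_rootP; rewrite size_map_poly; case: (size p) size_p => [|[]].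
have [a [a_lt0 z_eq]] := neg_p z root_z.
have root_a : root p a by move: root_z; rewrite z_eq /root horner_map fmorph_eq0.
have [q pE] := factor_theorem p a root_a.
exists (- a); first by rewrite oppr_gt0.
exists q; first by rewrite pE polyCN.
move=> w root_w; apply: neg_p.
by rewrite pE /root rmorphM /= hornerM (eqP root_w) mul0r.
Qed.

Section Moments.
Variable R : realType.
Notation mu := (@lebesgue_measure R).

Lemma powR_cvg_left1 (s : R) : 0 < s -> (fun u : R => u `^ s) @ 1^'- --> 1 `^ s.
Proof.
move=> s_gt0; apply/cvg_at_left_filter.
apply: (@differentiable_continuous _ _ _ (1 : R) (fun u : R => u `^ s)).
by apply/derivable1_diffP; apply: derivable_powR; rewrite in_itv/= andbT.
Qed.

Lemma integral_powR_itv01_gt0 (r : R) : 0 < r ->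
  (\int[mu]_(u in `[0%R, 1%R]) (u `^ r)%:E = (r + 1)^-1%:E)%E.
Proof.
move=> r_gt0; have r1_gt0 : 0 < r + 1 by rewrite addr_gt0.
have r1_neq0 : r + 1 != 0 by rewrite lt0r_neq0.
have powR_derivable s : {in `]0, 1[, forall x : R, derivable (fun u => u `^ s) x 1}.
  by move=> x; rewrite in_itv/= => /andP[x_gt0 _]; apply: derivable_powR; rewrite in_itv/= andbT.
have powR_LR : derivable_oo_LRcontinuous (fun u : R => u `^ r) 0 1.
  split; [exact: powR_derivable | | exact: powR_cvg_left1].
  by rewrite powR0 ?gt_eqF//; exact: powR_cvg0.
rewrite (@continuous_FTC2 _ _ (fun u => u `^ (r + 1) / (r + 1)) 0 1) //.
- by rewrite powR1 powR0 // mul0r sube0 mul1r.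
- exact: derivable_oo_LRcontinuous_within powR_LR.
- split.
  + by move=> x x01; apply: derivableM => //; exact: powR_derivable.
  + by apply: cvgMr_tmp; rewrite powR0 //; exact: powR_cvg0.
  + by apply: cvgMr_tmp; exact: powR_cvg_left1.
- move=> x x01; rewrite derive1Mr; last exact: powR_derivable.
  move: x01; rewrite in_itv/= => /andP[x_gt0 _].
  rewrite powR_derive1; last by rewrite in_itv/= andbT.
  by rewrite addrK mulrAC divff ?mul1r.
Qed.

Lemma integral_powR_itv01 (r : R) : 0 <= r ->
  (\int[mu]_(u in `[0%R, 1%R]) (u `^ r)%:E = (r + 1)^-1%:E)%E.
Proof.
rewrite le_eqVlt => /orP[/eqP <-|]; last exact: integral_powR_itv01_gt0.
under eq_integral do rewrite powRr0.
by rewrite integral_cst//= mul1e lebesgue_measure_itv/= lte01 oppr0 adde0 add0r invr1.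
Qed.

Definition monomial01 (n : nat) : R -> \bar R :=
  (fun x => (x ^+ n)%:E) \_ `[0%R, 1%R].

Lemma measurable_monomial01 n : measurable_fun setT (monomial01 n).
Proof.
apply/(measurable_restrictT (fun x : R => (x ^+ n)%:E)) => //.
by apply/measurable_EFinP; exact: measurable_funX.
Qed.

Lemma monomial01_ge0 n x : (0 <= monomial01 n x)%E.
Proof.
rewrite /monomial01 patchE; case: ifPn => // /set_mem/=.
by rewrite in_itv/= => /andP[x_ge0 _]; rewrite lee_fin exprn_ge0.
Qed.

(* Points outside [0,1] are left in place: multiplying them by u^(1/b) could
   move mass of P into [0,1] and spoil the moments on [0,1]. *)
Definition mul_root (b : R) (z : R * measurableTypeR R) : R :=
  z.1 * (\1_`[0%R, 1%R] z.1 * z.2 `^ b^-1 + (1 - \1_`[0%R, 1%R] z.1)).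

Lemma mul_rootE b x u : mul_root b (x, u) =
  if x \in `[0%R, 1%R]%classic then x * u `^ b^-1 else x.
Proof.
rewrite /mul_root /= indicE; case: (x \in _) => /=.
  by rewrite mul1r subrr addr0.
by rewrite mul0r add0r subr0 mulr1.
Qed.

Lemma measurable_mul_root b : measurable_fun setT (mul_root b).
Proof.
have indic01 : measurable_fun setT (fun z : R * measurableTypeR R =>
    \1_`[0%R, 1%R] z.1 : R).
  by apply: measurableT_comp => //; exact: measurable_indic.
apply: measurable_funM => //; apply: measurable_funD; last first.
  by apply: measurable_funB => //; exact: measurable_cst.
apply: measurable_funM => //.
exact: (@measurableT_comp _ _ _ _ _ _ (fun u : R => u `^ b^-1)).
Qed.

HB.instance Definition _ b :=
  isMeasurableFun.Build _ _ _ _ (mul_root b) (measurable_mul_root b).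

Notation U := (uniform_prob (@ltr01 R)).

Lemma integral_uniform_mul_root (b : R) (n : nat) (x : R) : 0 < b ->
  (\int[U]_u monomial01 n (mul_root b (x, u))
   = (b / (n%:R + b))%:E * monomial01 n x)%E.
Proof.
move=> b_gt0; have [x01|x_out] := boolP (x \in `[0%R, 1%R]%classic); last first.
  rewrite /monomial01 patchE (negbTE x_out) mule0 integral0_eq// => u _.
  by rewrite mul_rootE (negbTE x_out) patchE (negbTE x_out).
have /andP[x_ge0 x_le1] : (0 <= x) && (x <= 1) by move: x01; rewrite inE/= in_itv.
have measurable_mom_root : measurable_fun setT (monomial01 n \o mul_root b).
  by apply: measurableT_comp => //; exact: measurable_monomial01.
rewrite integral_uniform //=; last 2 first.
- exact: (measurable_fun_pair2 x measurable_mom_root).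
- by move=> ?; exact: monomial01_ge0.
rewrite subr0 invr1 mul1e.
transitivity (\int[mu]_(u in `[0%R, 1%R]) ((x ^+ n)%:E * (u `^ (n%:R / b))%:E))%E.
  apply: eq_integral => u; rewrite inE /= in_itv /= => /andP[u_ge0 u_le1].
  have root_ge0 : 0 <= u `^ b^-1 by exact: powR_ge0.
  have root_le1 : u `^ b^-1 <= 1.
    have -> : 1 = 1 `^ b^-1 :> R by rewrite powR1.
    by apply: ge0_ler_powR; rewrite ?nnegrE ?invr_ge0 ?ler01 //; exact: ltW.
  rewrite mul_rootE x01 /monomial01 patchE ifT; last first.
    by rewrite inE /= in_itv /= mulr_ge0 //= mulr_ile1.
  by rewrite -EFinM exprMn -(powR_mulrn _ root_ge0) -powRrM (mulrC b^-1).
rewrite ge0_integralZl_EFin ?exprn_ge0 //; last 2 first.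
- by move=> u _; rewrite lee_fin powR_ge0.
- by apply/measurable_EFinP; apply: measurable_funTS; exact: measurable_powR.
rewrite integral_powR_itv01; last by rewrite divr_ge0 // ltW.
have -> : n%:R / b + 1 = (n%:R + b) / b by rewrite mulrDl divff ?lt0r_neq0.
by rewrite invf_div /monomial01 patchE x01 -EFinM muleC -EFinM.
Qed.

Lemma moments_distribution_mul_root (P : probability R R) (b : R) (n : nat) :
  0 < b ->
  (\int[distribution (P \x U)%E (mul_root b)]_(x in `[0%R, 1%R]) (x ^+ n)%:E
   = (b / (n%:R + b))%:E * \int[P]_(x in `[0%R, 1%R]) (x ^+ n)%:E)%E.
Proof.
move=> b_gt0; have b_ge0 := ltW b_gt0.
rewrite integral_mkcond ge0_integral_distribution //;
  [|exact: measurable_monomial01|by move=> ?; exact: monomial01_ge0].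
rewrite fubini_tonelli1 //; last 2 first.
- by apply: measurableT_comp => //; exact: measurable_monomial01.
- by move=> ?; exact: monomial01_ge0.
rewrite [X in _ = (_ * X)%E]integral_mkcond -ge0_integralZl //; last 3 first.
- exact: measurable_monomial01.
- by move=> ? _; exact: monomial01_ge0.
- by rewrite lee_fin divr_ge0 ?addr_ge0.
by apply: eq_integral => x _; exact: integral_uniform_mul_root.
Qed.

Definition scaled_prob_moments (a : nat -> R) : Prop :=
  exists (P : probability R R) (c : R), 0 <= c /\ forall n : nat,
    ((a n)%:E = c%:E * \int[P]_(x in `[0%R, 1%R]) (x ^+ n)%:E)%E.

Lemma scaled_prob_moments_cst (c : R) : 0 <= c ->
  scaled_prob_moments (fun => c).
Proof.
move=> c_ge0; exists (\d_(1 : R) : probability R R), c; split => // n.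
rewrite integral_dirac; [|exact: measurable_itv|]; last first.
  by apply/measurable_EFinP; apply: measurable_funTS; exact: measurable_funX.
rewrite /= diracE mem_set ?expr1n ?mul1e ?mule1 //=.
by rewrite in_itv/= ler01 lexx.
Qed.

Lemma scaled_prob_moments_div (a : nat -> R) (b : R) : 0 < b ->
  scaled_prob_moments a ->
  scaled_prob_moments (fun n => a n / (n%:R + b)).
Proof.
move=> b_gt0 [P [c [c_ge0 aE]]].
exists (distribution (P \x U)%E (mul_root b)), (c / b); split.
  by rewrite divr_ge0 // ltW.
move=> n; rewrite moments_distribution_mul_root // EFinM aE.
rewrite muleA -EFinM muleC muleA -EFinM; congr (_%:E * _)%E.
by rewrite mulrA divfK ?lt0r_neq0 // mulrC.
Qed.

Lemma scaled_prob_moments_hausdorff (a : nat -> R) :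
  scaled_prob_moments a -> hausdorff_moment_seq a.
Proof.
move=> [P [c [c_ge0 aE]]]; exists (mscale (NngNum c_ge0) P) => n.
rewrite aE ge0_integral_mscale //.
- by apply/measurable_EFinP; apply: measurable_funTS; exact: measurable_funX.
- by move=> x; rewrite /= in_itv /= => /andP[x_ge0 _]; rewrite lee_fin exprn_ge0.
Qed.

Lemma inv_horner_nat_scaled_prob_moments (p : {poly R}) :
  all_roots_negative_real p -> 0 < lead_coef p ->
  (forall n : nat, 0 < p.[n%:R]) /\
  scaled_prob_moments (fun n : nat => (p.[n%:R])^-1).
Proof.
elim: {p}(size p) {-2}p (erefl (size p)) => [|k IH] p size_p neg_p lead_gt0.
  by move: lead_gt0; move/eqP: size_p; rewrite size_poly_eq0 => /eqP ->;
    rewrite lead_coef0 ltxx.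
have [size_le1|size_gt1] := leqP (size p) 1.
  have pE := size1_polyC size_le1; rewrite pE lead_coefC in lead_gt0.
  have horner_p n : p.[n%:R] = p`_0 by rewrite [in LHS]pE hornerC.
  split=> [n|]; first by rewrite horner_p.
  under eq_fun do rewrite horner_p.
  by apply: scaled_prob_moments_cst; rewrite invr_ge0 ltW.
have [b b_gt0 [q pE neg_q]] := all_roots_negative_real_factor neg_p size_gt1.
have monic_Xb : 'X + b%:P \is monic by rewrite -(opprK b%:P) -polyCN monicXsubC.
have q_neq0 : q != 0.
  by apply: contraTneq size_gt1 => q_eq0; rewrite pE q_eq0 mul0r size_poly0.
have size_q : size q = k.
  by move: size_p; rewrite pE size_Mmonic // size_XaddC addn2; case.
rewrite pE lead_coef_Mmonic // in lead_gt0.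
have [q_pos q_moments] := IH q size_q neg_q lead_gt0.
have horner_p n : p.[n%:R] = q.[n%:R] * (n%:R + b).
  by rewrite pE hornerM hornerD hornerX hornerC.
have nb_gt0 n : 0 < (n%:R : R) + b by apply: ltr_wpDl.
split=> [n|]; first by rewrite horner_p mulr_gt0.
under eq_fun do rewrite horner_p invfM.
exact: scaled_prob_moments_div.
Qed.

End Moments.

Theorem proposition3p2 (R : realType) (p : {poly R}) :
  all_roots_negative_real p -> 0 < lead_coef p ->
  (forall n : nat, 0 < p.[n%:R]) /\
  hausdorff_moment_seq (fun n : nat => (p.[n%:R])^-1).
Proof.
move=> neg_p lead_gt0.
have [p_pos p_moments] := inv_horner_nat_scaled_prob_moments neg_p lead_gt0.
by split => //; exact: scaled_prob_moments_hausdorff.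
Qed.
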